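(* Let $\kappa$ be a regular uncountable cardinal, $I$ an ideal on $\kappa$, and $L=\{\lambda+1:\lambda<\kappa \text{ a limit ordinal}\}$. Then $I$ is normal if and only if $I$ is pleasant and $L\in I$.
   Context: An ideal on $\kappa$ is a family of subsets of $\kappa$ closed under subsets and finite unions, which is $<\kappa$-complete and contains all singletons. For $A\subseteq\kappa$ and $X_\alpha\subseteq\kappa$, $\bigtriangledown_{\alpha\in A}X_\alpha=\{\xi<\kappa:\exists\alpha<\xi\,(\alpha\in A\wedge \xi\in X_\alpha)\}$. $I$ is normal if $X_\alpha\in I$ for all $\alpha<\kappa$ implies $\bigtriangledown_{\alpha<\kappa}X_\alpha\in I$. $I$ is pleasant if whenever $A\in I$ and $X_\alpha\in I$ for all $\alpha$, then $\bigtriangledown_{\alpha\in A}X_\alpha\in I$. *)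

From HB Require Import structures.
From mathcomp Require Import all_boot all_order.
Set Implicit Arguments. Unset Strict Implicit. Unset Printing Implicit Defensive.
Import Order.TTheory.
Local Open Scope order_scope.

(* The cardinal kappa is represented by a totally ordered type T (its
   elements are the ordinals < kappa, ordered by <). *)

(* |J| < |T|  (classically: there is no injection of T into J). *)
Definition smaller_than (T J : Type) : Prop :=
  ~ exists f : T -> J, injective f.

Section Card.
Context {d : Order.disp_t} (T : orderType d).

Definition wellordered : Prop :=
  forall A : T -> Prop, (exists x, A x) ->
    exists x, A x /\ forall y, A y -> x <= y.

Definition is_cardinal : Prop :=
  forall x : T, smaller_than T {y : T | y < x}.

Definition regular : Prop :=
  forall A : T -> Prop, smaller_than T {a : T | A a} ->
    exists b : T, forall a, A a -> a < b.

Definition uncountable : Prop := ~ exists f : T -> nat, injective f.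

Definition regular_uncountable_cardinal : Prop :=
  [/\ wellordered, is_cardinal, regular & uncountable].

Definition is_ideal (I : (T -> Prop) -> Prop) : Prop :=
  [/\ (forall X Y : T -> Prop, I X -> (forall x, Y x -> X x) -> I Y),
      (forall X Y : T -> Prop, I X -> I Y -> I (fun x => X x \/ Y x)),
      (forall (J : Type) (F : J -> T -> Prop), smaller_than T J ->
          (forall j, I (F j)) -> I (fun x => exists j, F j x))
    & (forall a : T, I (fun x => x = a))].

Definition diag_union (A : T -> Prop) (X : T -> T -> Prop) : T -> Prop :=
  fun xi => exists alpha, alpha < xi /\ A alpha /\ X alpha xi.

Definition normal (I : (T -> Prop) -> Prop) : Prop :=
  forall X : T -> T -> Prop, (forall alpha, I (X alpha)) ->
    I (diag_union (fun _ => True) X).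

Definition pleasant (I : (T -> Prop) -> Prop) : Prop :=
  forall (A : T -> Prop) (X : T -> T -> Prop), I A ->
    (forall alpha, I (X alpha)) -> I (diag_union A X).

Definition succ_of (x y : T) : Prop :=
  x < y /\ forall z, x < z -> y <= z.

Definition is_limit (l : T) : Prop :=
  (exists z, z < l) /\ ~ exists x, succ_of x l.

Definition Lset : T -> Prop :=
  fun y => exists l, is_limit l /\ succ_of l y.

End Card.

From mathcomp Require Import all_boot all_order.
From Stdlib Require Import Classical ClassicalEpsilon.
Import Order.TTheory.

Set Implicit Arguments.
Unset Strict Implicit.
Unset Printing Implicit Defensive.

(* Normality gives pleasantness at once, and L is the diagonal union of the
   singletons {λ+1}, λ limit.  Conversely, let α < x with x ∈ X_α.  Either x
   is the successor of a non-successor (these ordinals form L plus the single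
   ordinal 1), or, with p the last non-successor below α and g = p+1, we have
   g < x and α lies in the ω-run of successors above g.  That run is
   countable, hence bounded and of size < κ, so X_α is absorbed into W_g, the
   union of the X_a over the run, and the diagonal union of X is covered by
   L ∪ {1} together with the diagonal union of the W_g over that small set. *)

Local Open Scope order_scope.

Lemma smaller_than_inj (T J J' : Type) (h : J' -> J) :
  injective h -> smaller_than T J -> smaller_than T J'.
Proof. by move=> h_inj small [f f_inj]; apply: small; exists (h \o f); exact: inj_comp. Qed.

Lemma sval_inj (T : Type) (P : T -> Prop) : injective (@sval T P).
Proof. exact: eq_sig_hprop (fun x => proof_irrelevance (P x)). Qed.

Section SuccessorRuns.
Context {d : Order.disp_t} (T : orderType d).
Hypothesis wo : wellordered T.

Lemma wo_ind (P : T -> Prop) :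
  (forall x, (forall y, y < x -> P y) -> P x) -> forall x, P x.
Proof.
move=> IH x; apply: NNPP => nPx.
have [y [nPy ymin]] := @wo (fun y => ~ P y) (ex_intro _ x nPx).
apply: nPy; apply: IH => z zy; apply: NNPP => nPz.
by have := ymin z nPz; rewrite leNgt zy.
Qed.

Lemma succ_of_uniq (x y y' : T) : succ_of x y -> succ_of x y' -> y = y'.
Proof. by move=> [xy ymin] [xy' ymin']; apply/le_anti; rewrite ymin // ymin'. Qed.

Lemma succ_of_le_pred (u x z : T) : succ_of u x -> z < x -> z <= u.
Proof.
move=> [_ xmin] zx; rewrite leNgt; apply/negP => uz.
by have := xmin z uz; rewrite leNgt zx.
Qed.

Lemma exists_succ_of : (forall x : T, exists y, x < y) ->
  forall x : T, exists y, succ_of x y.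
Proof.
move=> no_max x; have [y0 xy0] := no_max x.
by have [y [xy ymin]] := @wo (fun y => x < y) (ex_intro _ y0 xy0); exists y.
Qed.

Definition succ_run (g a : T) : Prop :=
  forall z, g < z -> z <= a -> exists u, succ_of u z.

Definition succ_of_nonsucc (g : T) : Prop :=
  exists p, succ_of p g /\ ~ exists u, succ_of u p.

Definition run_union (X : T -> T -> Prop) (g : T) : T -> Prop :=
  fun x => exists a : {a | succ_run g a}, X (sval a) x.

Lemma succ_run_iter (s : T -> T) : (forall x, succ_of x (s x)) ->
  forall g a, g <= a -> succ_run g a -> exists n, iter n s g = a.
Proof.
move=> s_succ g; elim/wo_ind => a IH ga run_a.
case: (eqVneq a g) => [->|a_neq_g]; first by exists 0%N.
have gla : g < a by rewrite lt_neqAle eq_sym a_neq_g ga.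
have [u ua] := run_a a gla (lexx a).
have [n nu] := IH u (proj1 ua) (succ_of_le_pred ua gla)
  (fun z gz zu => run_a z gz (le_trans zu (ltW (proj1 ua)))).
by exists n.+1; rewrite iterS nu; exact: succ_of_uniq (s_succ _) ua.
Qed.

Lemma succ_run_from_nonsucc (a : T) :
  exists p, p <= a /\ succ_run p a /\ ~ exists u, succ_of u p.
Proof.
elim/wo_ind: a => a IH.
case: (classic (exists u, succ_of u a)) => [[u ua]|a_nonsucc]; last first.
  by exists a; split=> //; split=> // z az za; move: za; rewrite leNgt az.
have [p [pu [run_p p_nonsucc]]] := IH u (proj1 ua).
exists p; split; first exact: le_trans pu (ltW (proj1 ua)).
split=> // z pz za; case: (eqVneq z a) => [->|z_neq_a]; first by exists u.
by apply: run_p => //; apply: succ_of_le_pred ua _; rewrite lt_neqAle z_neq_a.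
Qed.

Lemma diag_union_cover (X : T -> T -> Prop) (x : T) :
  (forall y : T, exists z, succ_of y z) ->
  diag_union (fun _ => True) X x ->
  succ_of_nonsucc x \/ diag_union succ_of_nonsucc (run_union X) x.
Proof.
move=> has_succ [al [alx [_ Xx]]].
case: (classic (succ_of_nonsucc x)) => x_nonA; [by left | right].
have [p [pal [run_p p_nonsucc]]] := succ_run_from_nonsucc al.
have [g pg] := has_succ p.
have gx : g < x.
  rewrite lt_neqAle (proj2 pg x (le_lt_trans pal alx)) andbT.
  by apply/eqP => gx; apply: x_nonA; rewrite -gx; exists p.
exists g; split=> //; split; first by exists p.
by exists (exist _ al (fun z gz za => run_p z (lt_trans (proj1 pg) gz) za)).
Qed.

End SuccessorRuns.

Section Cardinals.
Context {d : Order.disp_t} (T : orderType d).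

Lemma uncountable_inhabited : uncountable T -> inhabited T.
Proof.
move=> unc; apply: NNPP => empty; apply: unc; exists (fun _ => 0%N) => x.
by case: empty; constructor.
Qed.

Lemma smaller_than_bounded (A : T -> Prop) (b : T) : is_cardinal T ->
  (forall a, A a -> a < b) -> smaller_than T {a | A a}.
Proof.
move=> card Ab.
apply: (smaller_than_inj
  (h := fun a : {a | A a} => exist (fun y => y < b) (sval a) (Ab _ (svalP a)))) (card b).
by move=> a1 a2 /(congr1 sval) /= /sval_inj.
Qed.

Lemma regular_no_max : regular T -> uncountable T -> forall x : T, exists y, x < y.
Proof.
move=> reg unc x.
have [b xb] : exists b, forall a, a = x -> a < b.
  apply: reg; apply: (smaller_than_inj (h := fun _ => 0%N)) unc => a1 a2 _.
  by apply: sval_inj; rewrite (svalP a1) (svalP a2).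
by exists b; apply: xb.
Qed.

Lemma succ_run_small (g : T) :
  regular_uncountable_cardinal T -> smaller_than T {a | succ_run g a}.
Proof.
move=> [wo card reg unc].
have /choice [s s_succ] := exists_succ_of wo (regular_no_max reg unc).
pose S a := g <= a /\ succ_run g a.
have S_small : smaller_than T {a | S a}.
  have /choice [k kP] : forall a : {a | S a}, exists n, iter n s g = sval a.
    by move=> [a [ga run_a]] /=; exact: (succ_run_iter wo s_succ ga run_a).
  by apply: (smaller_than_inj (h := k)) unc => a1 a2 e; apply: sval_inj; rewrite -kP e kP.
have [b Sb] := reg S S_small.
have gb : g < b.
  by apply: Sb; split=> // z gz zg; move: zg; rewrite leNgt gz.
apply: smaller_than_bounded card _ => a run_a.
by case: (leP a g) => [ag|ga]; [exact: le_lt_trans ag gb | apply: Sb; split; first exact: ltW].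
Qed.

End Cardinals.

Section Ideals.
Context {d : Order.disp_t} (T : orderType d) (I : (T -> Prop) -> Prop).
Hypothesis idI : is_ideal I.

Lemma ideal_sub (X Y : T -> Prop) : I X -> (forall x, Y x -> X x) -> I Y.
Proof. by case: idI => sub _ _ _; exact: sub. Qed.

Lemma ideal_union (X Y : T -> Prop) : I X -> I Y -> I (fun x => X x \/ Y x).
Proof. by case: idI => _ union _ _; exact: union. Qed.

Lemma ideal_subsingleton (a : T) (P : T -> Prop) :
  (forall x y, P x -> P y -> x = y) -> I P.
Proof.
case: idI => _ _ _ single P_uniq.
case: (classic (exists x, P x)) => [[x Px]|P_empty].
  by apply: ideal_sub (single x) _ => y Py; exact: P_uniq.
by apply: ideal_sub (single a) _ => y Py; case: P_empty; exists y.
Qed.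

Lemma normal_pleasant : normal I -> pleasant I.
Proof.
move=> nI A X _ IX; apply: ideal_sub (nI X IX) _.
by move=> x [al [alx [_ Xx]]]; exists al.
Qed.

Lemma normal_Lset : normal I -> I (@Lset _ T).
Proof.
move=> nI; pose X (al y : T) := is_limit al /\ succ_of al y.
have IX al : I (X al).
  by apply: (ideal_subsingleton al) => x y [_ alx] [_ aly]; exact: succ_of_uniq alx aly.
apply: ideal_sub (nI X IX) _ => y [l [l_lim ly]].
by exists l; split; [case: ly | split].
Qed.

Lemma ideal_succ_of_nonsucc (a : T) : I (@Lset _ T) -> I (@succ_of_nonsucc _ T).
Proof.
move=> IL; pose S1 (g : T) := exists p, succ_of p g /\ ~ exists z, z < p.
have IS1 : I S1.
  apply: (ideal_subsingleton a) => x y [p [px p_min]] [q [qy q_min]].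
  have pq : p = q.
    by case: (ltgtP p q) => // pq; [case: q_min; exists p | case: p_min; exists q].
  by move: qy; rewrite -pq; exact: succ_of_uniq px.
apply: ideal_sub (ideal_union IL IS1) _ => g [p [pg p_nonsucc]].
case: (classic (exists z, z < p)) => p_pos; last by right; exists p.
by left; exists p; split=> //; split.
Qed.

Lemma pleasant_normal : regular_uncountable_cardinal T ->
  pleasant I -> I (@Lset _ T) -> normal I.
Proof.
move=> kappa pI IL X IX; have [wo _ reg unc] := kappa.
have [a] := uncountable_inhabited unc.
have IA := ideal_succ_of_nonsucc a IL.
have IW g : I (run_union X g).
  case: idI => _ _ small_union _.
  by apply: small_union; [exact: succ_run_small | move=> j; exact: IX].
apply: ideal_sub (ideal_union IA (pI _ _ IA IW)) _ => x.
exact/diag_union_cover/exists_succ_of/regular_no_max.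
Qed.

End Ideals.

Theorem corollary3p8 (d : Order.disp_t) (T : orderType d)
    (I : (T -> Prop) -> Prop) :
  regular_uncountable_cardinal T -> is_ideal I ->
  (normal I <-> pleasant I /\ I (@Lset _ T)).
Proof.
move=> kappa idI; split.
  by move=> nI; split; [exact: normal_pleasant | exact: normal_Lset].
by case=> pI IL; exact: pleasant_normal.
Qed.
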